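(* Let $G$ be a finite abstract simplicial complex with connection matrix $L$. Then $\mathrm{str}(L^{-1})=\chi(G)$, where $\mathrm{str}(M)=\sum_{x\in G}\omega(x)M(x,x)$.
   Context: A finite abstract simplicial complex $G$ is a finite set of non-empty finite sets closed under taking non-empty subsets. $\omega(x)=(-1)^{|x|-1}$, $\chi(G)=\sum_{x\in G}\omega(x)$. The connection matrix $L$ is indexed by simplices with $L(x,y)=1$ if $x\cap y\neq\emptyset$ and $0$ otherwise; it is invertible. *)

From mathcomp Require Import all_boot all_order all_algebra.
Set Implicit Arguments. Unset Strict Implicit. Unset Printing Implicit Defensive.
Import GRing.Theory Num.Theory.
Local Open Scope ring_scope.

Definition simplicial_complex (T : finType) (G : {set {set T}}) : Prop :=
  (forall x : {set T}, x \in G -> x != set0) /\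
  (forall x y : {set T}, x \in G -> y \subset x -> y != set0 -> y \in G).

Definition omega (T : finType) (x : {set T}) : rat := (-1) ^+ (#|x|.-1).

Definition euler_char (T : finType) (G : {set {set T}}) : rat :=
  \sum_(x in G) omega x.

Definition simplex (T : finType) (G : {set {set T}}) (i : 'I_#|G|) : {set T} :=
  @enum_val _ (pred_of_set G) i.

Definition connection_matrix (T : finType) (G : {set {set T}}) : 'M[rat]_#|G| :=
  \matrix_(i, j) (if simplex i :&: simplex j != set0 then 1 else 0).

Definition supertrace (T : finType) (G : {set {set T}}) (M : 'M[rat]_#|G|) : rat :=
  \sum_(i < #|G|) omega (simplex i) * M i i.

From mathcomp Require Import all_boot all_order all_algebra.
Set Implicit Arguments. Unset Strict Implicit. Unset Printing Implicit Defensive.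
Import GRing.Theory Num.Theory.
Local Open Scope ring_scope.

(* Let A(x,y) = [x ⊆ y] and D = diag(ω). Counting the common faces of x and y
   gives L = Aᵀ D A, since a nonempty set has alternating face sum 1. Möbius
   inversion on the face poset, Σ_{x ⊆ z ⊆ y} ω(z) = ω(x) [x = y], says that
   A⁻¹ = D A D; as D² = 1 this yields L⁻¹ = D A D Aᵀ D. Hence
   str(L⁻¹) = tr(D L⁻¹) = tr(A D Aᵀ D) = tr(D Aᵀ D A) = tr(D L) = Σ_x ω(x) = χ(G). *)

Lemma mulmx1_invmx (R : comUnitRingType) n (A B : 'M[R]_n) :
  A *m B = 1%:M -> invmx A = B.
Proof.
move=> AB1; have [uA _] := mulmx1_unit AB1.
by rewrite -[B]mul1mx -(mulVmx uA) -mulmxA AB1 mulmx1.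
Qed.

Section SignedSubsetSums.
Variable T : finType.

(* Toggling an element of [X :\: W] is a sign-reversing involution. *)
Lemma sum_sign_interval (R : numDomainType) (W X : {set T}) : W \proper X ->
  \sum_(x : {set T} | (W \subset x) && (x \subset X)) (-1) ^+ #|x| = 0 :> R.
Proof.
case/properP => _ [a aX naW].
pose h (x : {set T}) := if a \in x then x :\ a else a |: x.
have hK : involutive h.
  by move=> x; rewrite /h; case: (boolP (a \in x)) => ax;
    rewrite ?setD11 ?setD1K ?setU11 ?setU1K.
set S := (X in X = 0); suff: S = - S.
  by move/eqP; rewrite -addr_eq0 -mulr2n mulrn_eq0 /= => /eqP.
rewrite {1}/S (reindex_inj (inv_inj hK)) /= -sumrN.
apply: eq_big => x; rewrite /h; case: (boolP (a \in x)) => ax.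
- rewrite subsetD1 naW andbT; congr andb.
  apply/idP/idP => [|]; last exact: subset_trans (subD1set _ _).
  by move=> sxX; rewrite -(setD1K ax) subUset sub1set aX sxX.
- rewrite subUset sub1set aX /=; congr andb.
  apply/idP/idP => [|]; last by move/subset_trans; apply; apply: subsetUr.
  by move=> sWx; rewrite -(setU1K ax); apply/subsetD1P.
- move=> _; rewrite -{2}(setD1K ax) cardsU1 in_setD1 eqxx /=.
  by rewrite exprS mulN1r opprK.
- by move=> _; rewrite cardsU1 ax /= exprS mulN1r.
Qed.

(* The predecessor in [omega] is truncated: [omega set0 = 1]. *)
Lemma omegaE (x : {set T}) : x != set0 -> omega x = - (-1) ^+ #|x|.
Proof.
rewrite -card_gt0 => x_gt0.
by rewrite /omega -{2}(prednK x_gt0) exprS mulN1r opprK.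
Qed.

Lemma omega_sqr (x : {set T}) : omega x ^+ 2 = 1.
Proof. by rewrite /omega -exprM mulnC exprM sqrrN !expr1n. Qed.

Lemma sum_omega_nonempty_subsets (U : {set T}) :
  \sum_(x : {set T} | (x \subset U) && (x != set0)) omega x = (U != set0)%:R.
Proof.
have [->|U0] := eqVneq U set0.
  by rewrite big_pred0 // => x; rewrite subset0 andbN.
have := sum_sign_interval rat (W := set0) (X := U).
rewrite proper0 U0 => /(_ isT).
rewrite (bigD1 set0) ?sub0set //= cards0 expr0.
under eq_bigl => x do rewrite sub0set andTb.
move=> /eqP; rewrite addr_eq0 => /eqP ->.
by rewrite -sumrN; apply: eq_bigr => x /andP [_ /omegaE].
Qed.

Lemma sum_omega_interval (W X : {set T}) : W != set0 ->
  \sum_(x : {set T} | (W \subset x) && (x \subset X)) omega x =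
  omega W * (W == X)%:R.
Proof.
move=> W0; have [<-|neWX] := eqVneq W X.
  by rewrite mulr1 (big_pred1 W) // => x /=; rewrite eqEsubset andbC.
rewrite mulr0; have [sWX|nsWX] := boolP (W \subset X); last first.
  rewrite big_pred0 // => x.
  by apply: contraNF nsWX => /andP[]; apply: subset_trans.
have pWX : W \proper X by rewrite properEneq neWX.
rewrite -[RHS]oppr0 -[in RHS](sum_sign_interval _ pWX) -sumrN.
apply: eq_bigr => x /andP [sWx _].
by rewrite omegaE //; apply: contraNneq W0 => x0; rewrite -subset0 -x0.
Qed.

End SignedSubsetSums.

Section ConnectionMatrix.
Variables (T : finType) (G : {set {set T}}).
Hypothesis G_neq0 : forall x : {set T}, x \in G -> x != set0.
Hypothesis G_down :
  forall x y : {set T}, x \in G -> y \subset x -> y != set0 -> y \in G.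

Local Notation s := (@simplex T G).
Local Notation n := #|G|.

Lemma simplex_neq0 i : s i != set0.
Proof. exact/G_neq0/enum_valP. Qed.

Lemma sum_simplex (F : {set T} -> rat) :
  \sum_(i < n) F (s i) = \sum_(x in G) F x.
Proof. by rewrite [RHS](big_enum_val (A := pred_of_set G)). Qed.

Lemma sum_simplex_sub (F : {set T} -> rat) j :
  \sum_(k < n) (s k \subset s j)%:R * F (s k) =
  \sum_(x : {set T} | (x \subset s j) && (x != set0)) F x.
Proof.
rewrite (sum_simplex (fun x => (x \subset s j)%:R * F x)).
rewrite big_mkcond [RHS]big_mkcond.
apply: eq_bigr => x _; have [xs|] /= := boolP (x \subset s j); last first.
  by rewrite mul0r if_same.
have -> : (x \in G) = (x != set0).
  by apply/idP/idP => [/G_neq0 //|]; apply: G_down xs; apply: enum_valP.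
by rewrite mul1r.
Qed.

Lemma sum_omega_common_faces i j :
  \sum_(k < n) (s k \subset s i)%:R * omega (s k) * (s k \subset s j)%:R =
  (s i :&: s j != set0)%:R.
Proof.
under eq_bigr do rewrite -mulrA.
rewrite (sum_simplex_sub (fun x => omega x * (x \subset s j)%:R)).
rewrite -sum_omega_nonempty_subsets big_mkcond [RHS]big_mkcond.
apply: eq_bigr => x _; rewrite subsetI.
by case: (x \subset s i); case: (x \subset s j); rewrite /= ?mulr1 ?mulr0 ?if_same.
Qed.

Lemma sum_omega_between i j :
  \sum_(k < n) (s i \subset s k)%:R * omega (s k) * (s k \subset s j)%:R =
  omega (s i) * (i == j)%:R.
Proof.
under eq_bigr do rewrite mulrC.
rewrite (sum_simplex_sub (fun x => (s i \subset x)%:R * omega x)).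
rewrite -(inj_eq enum_val_inj) -sum_omega_interval ?simplex_neq0 //.
rewrite big_mkcond [RHS]big_mkcond; apply: eq_bigr => x _.
have [six|] /= := boolP (s i \subset x); last by rewrite mul0r if_same.
have -> : x != set0.
  by apply: contraNneq (simplex_neq0 i) => x0; rewrite -subset0 -x0.
by rewrite andbT mul1r.
Qed.

Definition subset_mx : 'M[rat]_n := \matrix_(i, j) (s i \subset s j)%:R.
Definition omega_mx : 'M[rat]_n := diag_mx (\row_i omega (s i)).

Lemma omega_mx_sqr : omega_mx *m omega_mx = 1%:M.
Proof.
apply/matrixP => i j; rewrite mul_mx_diag !mxE.
by have [->|] := eqVneq i j; rewrite ?mulr1n -?expr2 ?omega_sqr ?mulr0n ?mul0r.
Qed.

Lemma connection_matrixE :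
  connection_matrix G = subset_mx^T *m omega_mx *m subset_mx.
Proof.
apply/matrixP => i j; rewrite mul_mx_diag !mxE.
under eq_bigr do rewrite !mxE.
by rewrite sum_omega_common_faces; case: ifP.
Qed.

Lemma mul_subset_mx_moebius :
  subset_mx *m (omega_mx *m subset_mx *m omega_mx) = 1%:M.
Proof.
apply/matrixP => i j; rewrite mul_mx_diag !mxE.
under eq_bigr do rewrite mul_diag_mx !mxE !mulrA.
rewrite -big_distrl /= sum_omega_between.
by have [->|] := eqVneq i j; rewrite ?mulr1 -?expr2 ?omega_sqr ?mulr0 ?mul0r.
Qed.

Lemma invmx_connection_matrix : invmx (connection_matrix G) =
  omega_mx *m subset_mx *m omega_mx *m subset_mx^T *m omega_mx.
Proof.
rewrite connection_matrixE; set A := subset_mx; set D := omega_mx.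
have AM : A *m (D *m A *m D) = 1%:M := mul_subset_mx_moebius.
have MA := mulmx1C AM; have trD : D^T = D := tr_diag_mx _.
apply: mulmx1_invmx.
have -> : A^T *m D *m A *m (D *m A *m D *m A^T *m D) =
  A^T *m D *m (A *m (D *m A *m D)) *m A^T *m D by rewrite !mulmxA.
by rewrite AM mulmx1 -trmx1 -MA !trmx_mul trD !mulmxA.
Qed.

Lemma supertraceE (M : 'M[rat]_n) : supertrace M = \tr (omega_mx *m M).
Proof. by apply: eq_bigr => i _; rewrite mul_diag_mx !mxE. Qed.

Lemma euler_charE : euler_char G = \tr (omega_mx *m connection_matrix G).
Proof.
rewrite /euler_char -sum_simplex; apply: eq_bigr => i _.
by rewrite mul_diag_mx !mxE setIid simplex_neq0 mulr1.
Qed.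

End ConnectionMatrix.

Theorem mainTheorem11 (T : finType) (G : {set {set T}}) :
  simplicial_complex G ->
  supertrace (invmx (connection_matrix G)) = euler_char G.
Proof.
case=> G_neq0 G_down.
rewrite supertraceE (euler_charE G_neq0) (invmx_connection_matrix G_neq0 G_down).
rewrite (connection_matrixE G_neq0 G_down) !mulmxA omega_mx_sqr mul1mx.
by rewrite -!mulmxA (mxtrace_mulC (subset_mx G)) !mulmxA.
Qed.
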